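(* There exists a convex decision set $\mathcal{X}\subset\mathbb{R}^d$ such that, for each communication network $G$ and for arbitrary (and possibly different) online learning algorithms run by the agents, there is a sequence $(S_1,\ell_1),\dots,(S_T,\ell_T)$, where $\ell_t$ are convex losses on $\mathcal{X}$ and $S_t=\{v_t\}$ with $v_t$ drawn i.i.d. from some fixed distribution on $V$, such that $\mathbb{E}[R_T]=\Omega(\sqrt{\alpha_G T})$, where the expectation is taken with respect to the random draw of $v_1,\dots,v_T$ and the constant hidden in $\Omega$ does not depend on $G$, $T$ or the algorithms.
   Context: Setting (cooperative online convex optimization): $G=(V,E)$ is an undirected graph with $V=\{1,\dots,N\}$; $\mathcal{N}_v=\{v\}\cup\{w:(v,w)\in E\}$; $\alpha_G$ is the independence number (largest size of a set of pairwise non-adjacent vertices). Initially, hidden from the agents, the environment fixes active sets $S_1,S_2,\dots\subseteq V$ and differentiable convex losses $\ell_1,\ell_2,\dots$ on $\mathcal{X}$. At each time $t$: each $v\in S_t$ predicts $\boldsymbol{x}_t(v)\in\mathcal{X}$; every agent in $\bigcup_{u\in S_t}\mathcal{N}_u$ receives $\ell_t$ as feedback; the system incurs loss $\frac{1}{|S_t|}\sum_{v\in S_t}\ell_t(\boldsymbol{x}_t(v))$. Network regret: $R_T=\sum_{t=1}^T\frac{1}{|S_t|}\sum_{v\in S_t}\ell_t(\boldsymbol{x}_t(v))-\inf_{\boldsymbol{x}\in\mathcal{X}}\sum_{t=1}^T\ell_t(\boldsymbol{x})$. Here the agents' algorithms are unrestricted: they may know the graph and may treat feedback from different sources differently (no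 oblivious-interface restriction); each agent's prediction may depend only on the feedback it has received. *)

From HB Require Import structures.
From mathcomp Require Import all_boot all_order all_algebra.
From mathcomp Require Import all_classical all_reals all_analysis.
Set Implicit Arguments. Unset Strict Implicit. Unset Printing Implicit Defensive.
Import Order.TTheory GRing.Theory Num.Theory.
Import numFieldNormedType.Exports.
Local Open Scope ring_scope.
Local Open Scope classical_set_scope.

Section CoopOCO.
Variable R : realType.

Definition simple_graph (N : nat) (E : rel 'I_N) : Prop :=
  irreflexive E /\ symmetric E.

Definition nbhd (N : nat) (E : rel 'I_N) (v : 'I_N) : {set 'I_N} :=
  [set w | (w == v) || E v w].

Definition independent (N : nat) (E : rel 'I_N) (A : {set 'I_N}) : bool :=
  [forall u in A, forall w in A, ~~ E u w].

Definition independence_number (N : nat) (E : rel 'I_N) : nat :=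
  (\max_(A : {set 'I_N} | independent E A) #|A|)%N.

Definition enorm (d : nat) (x : 'rV[R]_d) : R :=
  Num.sqrt (\sum_(i < d) x ord0 i ^+ 2).

Definition convex_on (d : nat) (X : set 'rV[R]_d) (f : 'rV[R]_d -> R) : Prop :=
  forall x y, X x -> X y -> forall t : R, 0 <= t <= 1 ->
    f (t *: x + (1 - t) *: y) <= t * f x + (1 - t) * f y.

Definition lipschitz1_on (d : nat) (X : set 'rV[R]_d) (f : 'rV[R]_d -> R) : Prop :=
  forall x y, X x -> X y -> `|f x - f y| <= enorm (x - y).

Definition admissible_loss (d : nat) (X : set 'rV[R]_d) (f : 'rV[R]_d -> R) : Prop :=
  convex_on X f /\ (forall x, X x -> differentiable f x) /\ lipschitz1_on X f.

Definition loss (d : nat) := 'rV[R]_d -> R.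

(* What agent v observes at round s: the set of active agents in its closed
   neighbourhood (the "sources" of feedback) and, if that set is nonempty,
   the loss l_s. *)
Definition obs (N d : nat) := ({set 'I_N} * option (loss d))%type.

(* A (deterministic) algorithm for each agent: given the round t and the
   feedback history of rounds 0..t-1, output a prediction. Different agents
   may run different algorithms; the algorithms may depend on the graph. *)
Definition strategy (N d : nat) := 'I_N -> nat -> seq (obs N d) -> 'rV[R]_d.

Definition observation (N d : nat) (E : rel 'I_N) (S : nat -> {set 'I_N})
    (l : nat -> loss d) (v : 'I_N) (s : nat) : obs N d :=
  let A := S s :&: nbhd E v in
  (A, if A == finset.set0 then None else Some (l s)).

Definition history (N d : nat) (E : rel 'I_N) (S : nat -> {set 'I_N})
    (l : nat -> loss d) (v : 'I_N) (t : nat) : seq (obs N d) :=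
  [seq observation E S l v s | s <- iota 0 t].

Definition prediction (N d : nat) (alg : strategy N d) (E : rel 'I_N)
    (S : nat -> {set 'I_N}) (l : nat -> loss d) (v : 'I_N) (t : nat) : 'rV[R]_d :=
  alg v t (history E S l v t).

Definition network_regret (N d : nat) (E : rel 'I_N) (X : set 'rV[R]_d)
    (alg : strategy N d) (S : nat -> {set 'I_N}) (l : nat -> loss d) (T : nat) : R :=
  \sum_(t < T) ((#|S t|%:R)^-1 * \sum_(v in S t) l t (prediction alg E S l v t))
  - inf [set (\sum_(t < T) l t x) | x in X].

Definition is_distribution (N : nat) (p : 'I_N -> R) : Prop :=
  (forall v, 0 <= p v) /\ \sum_(v < N) p v = 1.

Definition singleton_sets (N T : nat) (vs : {ffun 'I_T -> 'I_N}) : nat -> {set 'I_N} :=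
  fun t => if (insub t : option 'I_T) is Some i then finset.set1 (vs i) else finset.set0.

Definition iid_expectation (N T : nat) (p : 'I_N -> R)
    (F : {ffun 'I_T -> 'I_N} -> R) : R :=
  \sum_(vs : {ffun 'I_T -> 'I_N}) (\prod_(t < T) p (vs t)) * F vs.

End CoopOCO.

(* Yao's principle on the segment [-1, 1] with linear losses [x |-> s_t x], where
   the signs s_t are drawn from a half-half mixture of i.i.d. signs with mean [eps]
   and i.i.d. signs with mean [-eps], and the active agents are drawn uniformly
   from a maximum independent set A.  The comparator gains [E |sum_t s_t| >= eps T].
   The agent active at round t has only seen the signs of earlier rounds whose
   agent is one of its neighbours; as A is independent, these are at most
   [T / alpha] in expectation.  On k observed signs the two halves of the mixture
   are [8 k eps^2 + 1/4]-close in L1, so the learner's expected loss at round t is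
   at least [- eps / 2 * (8 k eps^2 + 1/4)].  The regret averaged over the mixture
   is thus at least [7/8 eps T - 4 eps^3 T^2 / alpha], which is
   [5/32 sqrt (alpha T)] for [eps = sqrt (alpha / T) / 4]; some fixed sign
   sequence does at least as well as the average. *)

From HB Require Import structures.
From mathcomp Require Import all_boot all_order all_algebra.
From mathcomp Require Import all_classical all_reals all_analysis.
From mathcomp Require Import ring lra.
Import Order.TTheory GRing.Theory Num.Theory.
Local Open Scope ring_scope.

Set Implicit Arguments. Unset Strict Implicit.

Section ScalarBounds.
Variable R : realFieldType.

Lemma bernoulli_inequality (u : R) n : 0 <= u <= 1 -> 1 - n%:R * u <= (1 - u) ^+ n.
Proof.
move=> /andP[u0 u1]; elim: n => [|n IH]; first by rewrite expr0 mul0r subr0.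
have h0 : 0 <= (1 - u) ^+ n by apply: exprn_ge0; lra.
have h1 : 0 <= n%:R * u by apply: mulr_ge0.
rewrite exprS -natr1; nra.
Qed.

Lemma sub_expr_1pm_le (u : R) n : 0 <= u <= 1 -> n%:R * u <= 1 / 2 ->
  (1 + u) ^+ n - (1 - u) ^+ n <= 4 * (n%:R * u).
Proof.
move=> /andP[u0 u1] nu; set a := (1 + u) ^+ n; set b := (1 - u) ^+ n.
have hb : 1 - n%:R * u <= b by apply: bernoulli_inequality; lra.
have hab : a * b <= 1 by rewrite -exprMn; apply: exprn_ile1; nra.
have a0 : 0 <= a by apply: exprn_ge0; lra.
have nu0 : 0 <= n%:R * u by apply: mulr_ge0.
nra.
Qed.

Lemma normr_le_sqr_add (x : R) : `|x| <= x ^+ 2 + 1 / 4.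
Proof.
have := sqr_ge0 (`|x| - 1 / 2); rewrite -[x ^+ 2]real_normK ?num_real // !expr2.
by nra.
Qed.

End ScalarBounds.

Section SignVectors.
Variables (R : realFieldType) (I : finType).

Definition determined_by T (P : {pred I}) (F : {ffun I -> bool} -> T) : Prop :=
  forall g g' : {ffun I -> bool}, {in P, g =1 g'} -> F g = F g'.

Definition flip_at (i : I) (g : {ffun I -> bool}) : {ffun I -> bool} :=
  [ffun j => if j == i then ~~ g j else g j].

Lemma flip_atK i : involutive (flip_at i).
Proof.
move=> g; apply/ffunP => j; rewrite !ffunE.
by case: eqP => // _; rewrite negbK.
Qed.

Lemma sum_mul_coord_avg (F : {ffun I -> bool} -> R) (h : bool -> R) i :
  determined_by (predC1 i) F ->
  \sum_g F g * h (g i) = (h true + h false) / 2 * \sum_g F g.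
Proof.
move=> Fi.
have flipE : \sum_g F g * h (g i) = \sum_g F g * h (~~ g i).
  rewrite (reindex_inj (inv_inj (flip_atK i))) /=.
  apply: eq_bigr => g _; rewrite ffunE eqxx; congr (_ * _); apply: Fi => j /= ji.
  by rewrite ffunE (negbTE ji).
suff : \sum_g F g * h (g i) + \sum_g F g * h (g i) = (h true + h false) * \sum_g F g.
  by rewrite mulrAC => <-; field.
rewrite [X in _ + X]flipE -big_split mulr_sumr /=.
by apply: eq_bigr => g _; case: (g i) => /=; ring.
Qed.

Lemma sum_mul_prod_avg (Q : seq I) (F : {ffun I -> bool} -> R) (h : I -> bool -> R) :
  uniq Q -> determined_by [predC Q] F ->
  \sum_g F g * \prod_(j <- Q) h j (g j)
  = \prod_(j <- Q) ((h j true + h j false) / 2) * \sum_g F g.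
Proof.
elim: Q F => [|i Q IH] F /=.
  by move=> _ _; rewrite big_nil mul1r; apply: eq_bigr => g _; rewrite big_nil mulr1.
move=> /andP[iQ uQ] FQ.
have FQ' : determined_by [predC Q] (fun g => F g * h i (g i)).
  move=> g g' gg'; rewrite (gg' i) ?(FQ g g') // => j /=.
  by rewrite inE negb_or => /andP[_ /gg'].
under eq_bigr do rewrite big_cons mulrA.
rewrite (IH _ uQ FQ') sum_mul_coord_avg; last first.
  by move=> g g' gg'; apply: FQ => j; rewrite !inE negb_or => /andP[/gg'].
by rewrite big_cons mulrCA mulrA.
Qed.

Lemma sum_mul_prod_set_avg (Q : {set I}) (F : {ffun I -> bool} -> R) (h : I -> bool -> R) :
  determined_by (~: Q) F ->
  \sum_g F g * \prod_(j in Q) h j (g j)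
  = \prod_(j in Q) ((h j true + h j false) / 2) * \sum_g F g.
Proof.
move=> FQ; transitivity (\sum_g F g * \prod_(j <- enum Q) h j (g j)).
  by apply: eq_bigr => g _; rewrite big_enum.
rewrite sum_mul_prod_avg ?enum_uniq ?big_enum // => g g' gg'.
by apply: FQ => j; rewrite inE => jQ; apply: gg'; rewrite !inE mem_enum.
Qed.

Definition signb (b : bool) : R := if b then 1 else -1.

(* The density, with respect to the uniform law on sign vectors, of the law under
   which the signs in [P] are independent with mean [e] and the others uniform. *)
Definition bias_density (e : R) (P : {set I}) (g : {ffun I -> bool}) : R :=
  \prod_(j in P) (1 + e * signb (g j)).

Lemma bias_density_determined e (P : {set I}) : determined_by P (bias_density e P).
Proof. by move=> g g' gg'; apply: eq_bigr => j /gg' ->. Qed.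

Lemma bias_density_ge0 e P g : `|e| <= 1 -> 0 <= bias_density e P g.
Proof.
rewrite ler_norml => /andP[e1 e2]; apply: prodr_ge0 => j _.
by rewrite /signb; case: (g j); lra.
Qed.

Lemma bias_densityN_mul e P g :
  bias_density e P g * bias_density (- e) P g = (1 - e ^+ 2) ^+ #|P|.
Proof.
rewrite -big_split -prodr_const; apply: eq_bigr => j _ /=.
by rewrite /signb; case: (g j); ring.
Qed.

Lemma sum_bias_density e P : \sum_g bias_density e P g = #|{ffun I -> bool}|%:R.
Proof.
transitivity (\sum_(g : {ffun I -> bool}) 1 * \prod_(j in P) (1 + e * signb (g j))).
  by apply: eq_bigr => g _; rewrite mul1r.
rewrite (sum_mul_prod_set_avg (fun _ b => 1 + e * signb b)) // big1 ?mul1r ?sumr_const //.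
by move=> j _; rewrite /signb; field.
Qed.

Lemma sum_bias_density_sqr e P :
  \sum_g bias_density e P g ^+ 2 = (1 + e ^+ 2) ^+ #|P| * #|{ffun I -> bool}|%:R.
Proof.
transitivity (\sum_(g : {ffun I -> bool}) 1 * \prod_(j in P) (1 + e * signb (g j)) ^+ 2).
  by apply: eq_bigr => g _; rewrite mul1r prodrXl.
rewrite (sum_mul_prod_set_avg (fun _ b => (1 + e * signb b) ^+ 2)) //.
rewrite sumr_const -prodr_const; congr (_ * _).
by apply: eq_bigr => j _; rewrite /signb; field.
Qed.

Lemma sum_bias_density_fresh_sign e (P : {set I}) t (x : {ffun I -> bool} -> R) :
  t \notin P -> determined_by P x ->
  \sum_g bias_density e [set: I] g * signb (g t) * x g
  = e * \sum_g x g * bias_density e P g.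
Proof.
move=> tP xP.
pose h j b := (1 + e * signb b) * (if j == t then signb b else 1).
have splitP g : bias_density e [set: I] g * signb (g t) * x g
    = x g * bias_density e P g * \prod_(j in ~: P) h j (g j).
  rewrite /bias_density (big_setID P) finset.setTI finset.setTD /h big_split /=.
  have -> : \prod_(j in ~: P) (if j == t then signb (g j) else 1) = signb (g t).
    rewrite (bigD1 t) ?inE //= eqxx big1 ?mulr1 // => j /andP[_ /negbTE ->] //.
  ring.
under eq_bigr do rewrite splitP.
rewrite sum_mul_prod_set_avg; last first.
  move=> g g'; rewrite finset.setCK => gg'.
  by rewrite (xP g g' gg') (bias_density_determined e gg').
rewrite (bigD1 t) ?inE //= big1 => [|j /andP[_ /negbTE jt]]; last first.
  by rewrite /h /= jt /signb; field.
by rewrite /h /= eqxx /signb mulr1; field.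
Qed.

Lemma sum_sqr_dist_bias_density e P :
  \sum_g (bias_density e P g - bias_density (- e) P g) ^+ 2
  = 2 * ((1 + e ^+ 2) ^+ #|P| - (1 - e ^+ 2) ^+ #|P|) * #|{ffun I -> bool}|%:R.
Proof.
transitivity (\sum_g bias_density e P g ^+ 2 + \sum_g bias_density (- e) P g ^+ 2
    - 2 * \sum_g bias_density e P g * bias_density (- e) P g).
  rewrite mulr_sumr -sumrN -!big_split; apply: eq_bigr => g _ /=; ring.
rewrite !sum_bias_density_sqr sqrrN.
under eq_bigr do rewrite bias_densityN_mul.
rewrite sumr_const; ring.
Qed.

Lemma sum_dist_bias_density e P : 0 <= e <= 1 ->
  \sum_g `|bias_density e P g - bias_density (- e) P g|
  <= (8 * (#|P|%:R * e ^+ 2) + 1 / 4) * #|{ffun I -> bool}|%:R.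
Proof.
move=> /andP[e0 e1]; set y := #|P|%:R * e ^+ 2.
have sum_cst (c : R) : \sum_(g : {ffun I -> bool}) c = c * #|{ffun I -> bool}|%:R.
  by rewrite sumr_const mulr_natr.
have [y_small|y_large] := lerP y (1 / 2).
  (* [|x| <= x^2 + 1/4] stands in for Cauchy-Schwarz, avoiding square roots. *)
  apply: le_trans (ler_sum _ (fun g _ => normr_le_sqr_add _)) _.
  rewrite big_split /= sum_sqr_dist_bias_density sum_cst -mulrDl ler_wpM2r //.
  have e2 : 0 <= e ^+ 2 <= 1 by rewrite sqr_ge0 /= expr2; nra.
  have := sub_expr_1pm_le e2 y_small; rewrite -/y; lra.
have normD g : `|bias_density e P g - bias_density (- e) P g|
    <= bias_density e P g + bias_density (- e) P g.
  have e_le1 : `|e| <= 1 by rewrite ger0_norm.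
  have := bias_density_ge0 P g e_le1.
  have := bias_density_ge0 P g (_ : `|- e| <= 1); rewrite normrN => /(_ e_le1).
  by rewrite ler_norml; lra.
apply: le_trans (ler_sum _ (fun g _ => normD g)) _.
rewrite big_split /= !sum_bias_density.
have y0 : 0 <= y by apply: mulr_ge0 => //; apply: sqr_ge0.
have Z0 : (0 : R) <= #|{ffun I -> bool}|%:R by [].
nra.
Qed.

Lemma sum_bias_density_sign e t :
  \sum_g bias_density e [set: I] g * signb (g t) = e * #|{ffun I -> bool}|%:R.
Proof.
have := @sum_bias_density_fresh_sign e finset.set0 t (fun _ => 1)
  (negbT (finset.in_set0 t)) (fun _ _ _ => erefl).
under eq_bigr do rewrite mulr1; move=> ->.
by under eq_bigr do rewrite mul1r /bias_density big_set0; rewrite sumr_const.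
Qed.

Definition mixture_weight (e : R) (g : {ffun I -> bool}) : R :=
  (bias_density e [set: I] g + bias_density (- e) [set: I] g)
  / (2 * #|{ffun I -> bool}|%:R).

Lemma card_sign_vectors_gt0 : (0 < #|{ffun I -> bool}|)%N.
Proof. by apply/card_gt0P; exists [ffun=> true]. Qed.

Lemma mixture_weight_ge0 e g : `|e| <= 1 -> 0 <= mixture_weight e g.
Proof.
move=> e1; apply: divr_ge0; last by rewrite mulr_ge0 ?ler0n.
by rewrite addr_ge0 // bias_density_ge0 ?normrN.
Qed.

Lemma sum_mixture_weight e : \sum_g mixture_weight e g = 1.
Proof.
have Z0 : (0 : R) < #|{ffun I -> bool}|%:R by rewrite ltr0n card_sign_vectors_gt0.
by rewrite -mulr_suml big_split /= !sum_bias_density; field; lra.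
Qed.

Lemma sum_mixture_weight_sign_mul_ge e (P : {set I}) t (x : {ffun I -> bool} -> R) :
  0 <= e <= 1 -> t \notin P -> determined_by P x -> (forall g, `|x g| <= 1) ->
  - (e / 2) * (8 * (#|P|%:R * e ^+ 2) + 1 / 4)
  <= \sum_g mixture_weight e g * (signb (g t) * x g).
Proof.
move=> e01 tP xP x1; set Z : R := #|{ffun I -> bool}|%:R.
have Z0 : 0 < Z by rewrite ltr0n card_sign_vectors_gt0.
set S := \sum_g x g * (bias_density e P g - bias_density (- e) P g).
have -> : \sum_g mixture_weight e g * (signb (g t) * x g) = e / 2 * (S / Z).
  transitivity ((\sum_g bias_density e [set: I] g * signb (g t) * x g
      + \sum_g bias_density (- e) [set: I] g * signb (g t) * x g) / (2 * Z)).
    rewrite -big_split mulr_suml; apply: eq_bigr => g _.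
    by rewrite /mixture_weight /=; ring.
  rewrite (sum_bias_density_fresh_sign e tP xP) (sum_bias_density_fresh_sign (- e) tP xP).
  rewrite mulNr -mulrBr -sumrB.
  rewrite (eq_bigr (fun g => x g * (bias_density e P g - bias_density (- e) P g))).
    by rewrite -/S; field; lra.
  by move=> g _; ring.
have : `|S| <= (8 * (#|P|%:R * e ^+ 2) + 1 / 4) * Z.
  apply: le_trans (ler_norm_sum _ _ _) (le_trans _ (sum_dist_bias_density P e01)).
  by apply: ler_sum => g _; rewrite normrM ler_piMl.
rewrite ler_norml => /andP[S_ge _]; case/andP: e01 => e0 _.
by rewrite mulNr -mulrN ler_wpM2l ?divr_ge0 // ler_pdivlMr // mulNr.
Qed.

Lemma sum_mixture_weight_abs_sum_sign_ge e : 0 <= e <= 1 ->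
  e * #|I|%:R <= \sum_g mixture_weight e g * `|\sum_j signb (g j)|.
Proof.
move=> /andP[e0 e1]; set Z : R := #|{ffun I -> bool}|%:R.
have Z0 : 0 < Z by rewrite ltr0n card_sign_vectors_gt0.
have e_le1 : `|e| <= 1 by rewrite ger0_norm.
have drift_le g : (bias_density e [set: I] g - bias_density (- e) [set: I] g) / (2 * Z)
    * \sum_j signb (g j) <= mixture_weight e g * `|\sum_j signb (g j)|.
  have D0 := bias_density_ge0 [set: I] g e_le1.
  have D'0 := bias_density_ge0 [set: I] g (_ : `|- e| <= 1); rewrite normrN in D'0.
  have {D'0}D'0 := D'0 e_le1.
  rewrite /mixture_weight !(mulrAC _ (2 * Z)^-1) ler_wpM2r ?invr_ge0 ?mulr_ge0 //.
  set S := \sum_j signb (g j).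
  have S1 : 0 <= `|S| - S by rewrite subr_ge0 ler_norm.
  have S2 : 0 <= `|S| + S by rewrite -lerBlDr sub0r -normrN ler_norm.
  have := mulr_ge0 D0 S1; have := mulr_ge0 D'0 S2; lra.
apply: le_trans (ler_sum _ (fun g _ => drift_le g)).
have sum_drift e' : \sum_g bias_density e' [set: I] g * \sum_j signb (g j)
    = #|I|%:R * (e' * Z).
  under eq_bigr do rewrite mulr_sumr; rewrite exchange_big /=.
  by under eq_bigr do rewrite sum_bias_density_sign; rewrite sumr_const mulr_natl.
have -> : \sum_g (bias_density e [set: I] g - bias_density (- e) [set: I] g) / (2 * Z)
    * \sum_j signb (g j)
    = (\sum_g bias_density e [set: I] g * \sum_j signb (g j)
       - \sum_g bias_density (- e) [set: I] g * \sum_j signb (g j)) / (2 * Z).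
  by rewrite -sumrB mulr_suml; apply: eq_bigr => g _; ring.
by rewrite !sum_drift (_ : _ / (2 * Z) = e * #|I|%:R) //; field; lra.
Qed.

End SignVectors.

Section IidExpectation.
Variables (R : realType) (N T : nat) (p : 'I_N -> R).
Hypotheses (p_ge0 : forall v, 0 <= p v) (p_sum1 : \sum_v p v = 1).

Lemma iid_expectation_sum (J : finType) (F : J -> {ffun 'I_T -> 'I_N} -> R) :
  iid_expectation p (fun vs => \sum_j F j vs) = \sum_j iid_expectation p (F j).
Proof.
rewrite /iid_expectation exchange_big /=; apply: eq_bigr => vs _.
by rewrite mulr_sumr.
Qed.

Lemma iid_expectationZ (a : R) (F : {ffun 'I_T -> 'I_N} -> R) :
  iid_expectation p (fun vs => a * F vs) = a * iid_expectation p F.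
Proof. by rewrite /iid_expectation mulr_sumr; apply: eq_bigr => vs _ /=; ring. Qed.

Lemma iid_expectationB (F G : {ffun 'I_T -> 'I_N} -> R) :
  iid_expectation p (fun vs => F vs - G vs)
  = iid_expectation p F - iid_expectation p G.
Proof. by rewrite /iid_expectation -sumrB; apply: eq_bigr => vs _ /=; ring. Qed.

Lemma le_iid_expectation (F G : {ffun 'I_T -> 'I_N} -> R) :
  (forall vs, F vs <= G vs) -> iid_expectation p F <= iid_expectation p G.
Proof.
move=> FG; apply: ler_sum => vs _; apply: ler_wpM2l => //.
exact: prodr_ge0.
Qed.

Lemma iid_expectation_prod (c : 'I_T -> 'I_N -> R) :
  iid_expectation p (fun vs => \prod_t c t (vs t)) = \prod_t \sum_v p v * c t v.
Proof.
rewrite bigA_distr_bigA /iid_expectation; apply: eq_bigr => vs _.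
by rewrite big_split.
Qed.

Lemma iid_expectation_cst (a : R) :
  iid_expectation p (fun _ : {ffun 'I_T -> 'I_N} => a) = a.
Proof.
have one : iid_expectation p (fun vs : {ffun 'I_T -> 'I_N} => \prod_(t < T) (1 : R)) = 1.
  rewrite (iid_expectation_prod (fun _ _ => 1)) big1 // => t _.
  by under eq_bigr do rewrite mulr1; exact: p_sum1.
by rewrite -[RHS]mulr1 -one -iid_expectationZ; apply: eq_bigr => vs _; rewrite big1_eq mulr1.
Qed.

Lemma iid_expectation_pair s t (f : 'I_N -> 'I_N -> R) : s != t ->
  iid_expectation p (fun vs : {ffun 'I_T -> 'I_N} => f (vs s) (vs t))
  = \sum_a \sum_b p a * p b * f a b.
Proof.
move=> st; have ts : t != s by rewrite eq_sym.
pose c (a b : 'I_N) (i : 'I_T) (v : 'I_N) : R :=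
  if i == s then (v == a)%:R else if i == t then (v == b)%:R else 1.
have delta (G : 'I_N -> R) u : \sum_a (u == a)%:R * G a = G u.
  rewrite (bigD1 u) //= eqxx mul1r big1 ?addr0 // => a au.
  by rewrite eq_sym (negbTE au) mul0r.
have prod_c a b (vs : {ffun 'I_T -> 'I_N}) :
    \prod_i c a b i (vs i) = (vs s == a)%:R * (vs t == b)%:R.
  rewrite (bigD1 s) // (bigD1 t) //= /c eqxx (negbTE ts) eqxx big1 ?mulr1 //.
  by move=> i /andP[/negbTE -> /negbTE ->].
have fE (vs : {ffun 'I_T -> 'I_N}) :
    f (vs s) (vs t) = \sum_a \sum_b f a b * \prod_i c a b i (vs i).
  rewrite -(delta (fun a => f a (vs t)) (vs s)); apply: eq_bigr => a _.
  rewrite -(delta (f a) (vs t)) mulr_sumr.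
  by apply: eq_bigr => b _; rewrite prod_c; ring.
transitivity (iid_expectation p
    (fun vs => \sum_a \sum_b f a b * \prod_i c a b i (vs i))).
  by apply: eq_bigr => vs _; rewrite fE.
rewrite iid_expectation_sum; apply: eq_bigr => a _.
rewrite iid_expectation_sum; apply: eq_bigr => b _.
rewrite iid_expectationZ iid_expectation_prod.
have pdelta u : \sum_v p v * (v == u)%:R = p u.
  by under eq_bigr do rewrite mulrC eq_sym; exact: delta.
rewrite (bigD1 s) // (bigD1 t) //= /c eqxx (negbTE ts) eqxx !pdelta big1 => [|i].
  by rewrite mulr1; ring.
by move=> /andP[/negbTE -> /negbTE ->]; under eq_bigr do rewrite mulr1.
Qed.

End IidExpectation.

Section UnitSegment.
Local Open Scope classical_set_scope.
Variable R : realType.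

Definition unit_segment : set 'rV[R]_1 := [set x | -1 <= x ord0 ord0 <= 1].

Definition linear_loss (a : R) : loss R 1 := fun x => a * x ord0 ord0.

Lemma unit_segment_convex : convex_set unit_segment.
Proof.
move=> x y l; rewrite !inE /unit_segment /= => /andP[x1 x2] /andP[y1 y2].
have l0 : 0 <= l%:num by [].
have l1 : l%:num <= 1 by [].
rewrite !mxE /unstable.onem; apply/andP; split; nra.
Qed.

Lemma unit_segment0 : unit_segment 0.
Proof. by rewrite /unit_segment /= mxE; lra. Qed.

Lemma unit_segment_enorm x : unit_segment x -> enorm x <= 1.
Proof.
rewrite /unit_segment /enorm /= => /andP[x1 x2].
by rewrite big_ord1 sqrtr_sqr ler_norml x1 x2.
Qed.

Lemma linear_loss_admissible (a : R) :
  `|a| <= 1 -> admissible_loss unit_segment (linear_loss a).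
Proof.
move=> a1; split; [|split].
- move=> x y _ _ t _; rewrite /linear_loss !mxE mulrDr !mulrA.
  by rewrite (mulrC a t) (mulrC a (1 - t)).
- move=> x _; rewrite (_ : linear_loss a = a *: (fun x : 'rV[R]_1 => x ord0 ord0)) //.
  exact/differentiableZ/differentiable_coord.
- move=> x y _ _; rewrite /linear_loss /enorm big_ord1 sqrtr_sqr !mxE -mulrBr normrM.
  by rewrite ler_piMl.
Qed.

Lemma inf_linear_loss_le (a : R) :
  inf [set linear_loss a x | x in unit_segment] <= - `|a|.
Proof.
have lb : has_lbound [set linear_loss a x | x in unit_segment].
  exists (- `|a|) => _ [x /andP[x1 x2] <-].
  have : `|linear_loss a x| <= `|a| by rewrite normrM ler_piMr // ler_norml x1 x2.
  by rewrite ler_norml => /andP[].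
pose x0 : 'rV[R]_1 := const_mx (if 0 <= a then -1 else 1).
have x0_in : unit_segment x0 by rewrite /unit_segment /= mxE; case: ifP => _; lra.
apply: le_trans (ge_inf lb (ex_intro2 _ _ x0 x0_in erefl)) _.
rewrite /linear_loss /x0 mxE; case: ifP => a0; first by rewrite ger0_norm // mulrN1.
by rewrite ltr0_norm ?mulr1 ?opprK // ltNge a0.
Qed.

End UnitSegment.
Arguments unit_segment {R}.

Section SignGame.
Variables (R : realType) (N T : nat) (E : rel 'I_N) (alg : strategy R N 1).
Hypothesis alg_in : forall v t h, unit_segment (alg v t h).

Definition sign_losses (g : {ffun 'I_T -> bool}) : nat -> loss R 1 :=
  fun s => if (insub s : option 'I_T) is Some t then linear_loss (signb R (g t))
           else linear_loss 0.

Lemma sign_losses_admissible g s : admissible_loss unit_segment (sign_losses g s).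
Proof.
rewrite /sign_losses; case: insub => [t|]; apply: linear_loss_admissible.
  by rewrite /signb; case: (g t); rewrite ?normrN normr1.
by rewrite normr0.
Qed.

Lemma sign_lossesE g (t : 'I_T) : sign_losses g t = linear_loss (signb R (g t)).
Proof. by rewrite /sign_losses valK. Qed.

Lemma singleton_setsE (vs : {ffun 'I_T -> 'I_N}) (t : 'I_T) :
  singleton_sets vs t = [set vs t]%SET.
Proof. by rewrite /singleton_sets valK. Qed.

Definition played (vs : {ffun 'I_T -> 'I_N}) (g : {ffun 'I_T -> bool}) (t : 'I_T) : R :=
  prediction alg E (singleton_sets vs) (sign_losses g) (vs t) t ord0 ord0.

Definition seen_rounds (vs : {ffun 'I_T -> 'I_N}) (t : 'I_T) : {set 'I_T} :=
  [set s : 'I_T | (s < t)%N && (vs s \in nbhd E (vs t))].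

Lemma played_determined vs t : determined_by (seen_rounds vs t) (fun g => played vs g t).
Proof.
move=> g g' gg'; rewrite /played /prediction; congr (alg _ _ _ _ _).
apply/eq_in_map => s; rewrite mem_iota add0n => /andP[_ st].
have sT : (s < T)%N by apply: ltn_trans st (ltn_ord t).
rewrite /observation /singleton_sets /sign_losses (insubT (fun x => x < T)%N sT) /=.
case: ifP => // seen; congr (_, Some (linear_loss (signb R _))); apply: gg'.
rewrite inE st /=; apply: contraFT seen => unseen; apply/eqP/setP => w.
by rewrite !inE; case: eqP => // ->; move: unseen; rewrite !inE => /negbTE.
Qed.

Lemma played_bounded vs g t : `|played vs g t| <= 1.
Proof. by rewrite ler_norml; apply: alg_in. Qed.

Lemma network_regret_sign_losses_ge vs (g : {ffun 'I_T -> bool}) :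
  \sum_(t < T) signb R (g t) * played vs g t + `|\sum_(t < T) signb R (g t)|
  <= network_regret E unit_segment alg (singleton_sets vs) (sign_losses g) T.
Proof.
rewrite /network_regret lerD //.
  apply: ler_sum => t _; rewrite singleton_setsE cards1 invr1 mul1r big_set1 sign_lossesE.
  exact: lexx.
have -> : (fun x => \sum_(t < T) sign_losses g t x)
    = linear_loss (\sum_(t < T) signb R (g t)).
  apply/funext => x; rewrite /linear_loss mulr_suml; apply: eq_bigr => t _.
  by rewrite sign_lossesE.
by rewrite lerNr; apply: inf_linear_loss_le.
Qed.

Lemma mixture_regret_ge_draw eps vs : 0 <= eps <= 1 ->
  7 / 8 * (eps * T%:R) - 4 * eps ^+ 3 * \sum_(t < T) #|seen_rounds vs t|%:R
  <= \sum_g mixture_weight eps g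
       * network_regret E unit_segment alg (singleton_sets vs) (sign_losses g) T.
Proof.
move=> eps01; have e_le1 : `|eps| <= 1 by case/andP: eps01 => e0 e1; rewrite ger0_norm.
apply: le_trans (ler_sum _ (fun g _ => ler_wpM2l (mixture_weight_ge0 g e_le1)
  (network_regret_sign_losses_ge vs g))).
under [X in _ <= X]eq_bigr do rewrite mulrDr mulr_sumr.
rewrite [leRHS]big_split /= [in leRHS]exchange_big /=.
have -> : 7 / 8 * (eps * T%:R) - 4 * eps ^+ 3 * \sum_(t < T) #|seen_rounds vs t|%:R
    = - (eps / 2) * \sum_(t < T) (8 * (#|seen_rounds vs t|%:R * eps ^+ 2) + 1 / 4)
      + eps * T%:R.
  rewrite big_split /= sumr_const card_ord -[1 / 4 *+ T]mulr_natr.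
  have -> : \sum_(t < T) 8 * (#|seen_rounds vs t|%:R * eps ^+ 2)
      = 8 * eps ^+ 2 * \sum_(t < T) #|seen_rounds vs t|%:R.
    by rewrite mulr_sumr; apply: eq_bigr => t _; ring.
  by field.
apply: lerD.
  rewrite mulr_sumr; apply: ler_sum => t _.
  apply: (sum_mixture_weight_sign_mul_ge eps01 _ (@played_determined vs t)).
    by rewrite inE ltnn.
  by move=> g; apply: played_bounded.
by have := sum_mixture_weight_abs_sum_sign_ge 'I_T eps01; rewrite card_ord.
Qed.

End SignGame.

Section IndependentSets.
Variables (N : nat) (E : rel 'I_N).

Lemma independence_number_witness :
  exists2 A : {set 'I_N}, independent E A & #|A| = independence_number E.
Proof.
have : (0 < #|[pred A : {set 'I_N} | independent E A]|)%N.
  by apply/card_gt0P; exists finset.set0; apply/forall_inP => u; rewrite inE.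
case/(eq_bigmax_cond (fun A : {set 'I_N} => #|A|)) => A A_indep eqA.
by exists A; rewrite ?inE // -eqA.
Qed.

Lemma independence_number_gt0 :
  (0 < N)%N -> irreflexive E -> (0 < independence_number E)%N.
Proof.
move=> N0 E_irr; pose v0 : 'I_N := Ordinal N0.
apply: leq_trans (_ : #|[set v0]| <= _)%N; first by rewrite cards1.
apply: (@leq_bigmax_cond _ (independent E) (fun A : {set 'I_N} => #|A|)).
by apply/forall_inP => u /set1P ->; apply/forall_inP => w /set1P ->; rewrite E_irr.
Qed.

End IndependentSets.

Section UniformOnIndependentSet.
Variables (R : realType) (N T : nat) (E : rel 'I_N) (A : {set 'I_N}).
Hypotheses (A_indep : independent E A) (A_gt0 : (0 < #|A|)%N).

Definition uniform_on (v : 'I_N) : R := if v \in A then #|A|%:R^-1 else 0.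

Lemma uniform_on_ge0 v : 0 <= uniform_on v.
Proof. by rewrite /uniform_on; case: ifP; rewrite ?invr_ge0. Qed.

Lemma sum_uniform_on : \sum_v uniform_on v = 1.
Proof.
rewrite /uniform_on -big_mkcond /= sumr_const -[LHS]mulr_natr mulVf //.
by rewrite pnatr_eq0 -lt0n.
Qed.

Lemma uniform_on_nbhd_pair :
  \sum_a \sum_b uniform_on a * uniform_on b * (a \in nbhd E b)%:R = #|A|%:R^-1.
Proof.
rewrite exchange_big /=.
have diag b : \sum_a uniform_on a * uniform_on b * (a \in nbhd E b)%:R
    = uniform_on b * #|A|%:R^-1.
  rewrite (bigD1 b) //= big1 ?addr0 => [|a ab].
    by rewrite inE eqxx mulr1 /uniform_on; case: ifP; rewrite ?mul0r ?mulr0.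
  rewrite /uniform_on inE (negbTE ab) /=.
  case: ifP => aA; last by rewrite !mul0r.
  case: ifP => bA; last by rewrite mulr0 mul0r.
  move/forall_inP: A_indep => /(_ b bA) /forall_inP /(_ a aA) /negbTE ->.
  by rewrite mulr0.
by under eq_bigr do rewrite diag; rewrite -mulr_suml sum_uniform_on mul1r.
Qed.

Lemma expected_card_seen_rounds_le (t : 'I_T) :
  iid_expectation uniform_on (fun vs => #|seen_rounds E vs t|%:R) <= T%:R / #|A|%:R.
Proof.
have cardE (vs : {ffun 'I_T -> 'I_N}) : #|seen_rounds E vs t|%:R
    = \sum_(s < T) (((s < t)%N && (vs s \in nbhd E (vs t)))%:R : R).
  rewrite -sum1_card natr_sum big_mkcond /=; apply: eq_bigr => s _.
  by rewrite inE; case: ifP.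
have -> : iid_expectation uniform_on (fun vs => #|seen_rounds E vs t|%:R)
    = iid_expectation uniform_on (fun vs =>
        \sum_(s < T) (((s < t)%N && (vs s \in nbhd E (vs t)))%:R : R)).
  by apply: eq_bigr => vs _; rewrite cardE.
rewrite iid_expectation_sum; apply: le_trans (_ : \sum_(s < T) #|A|%:R^-1 <= _).
  apply: ler_sum => s _.
  case: (ltnP s t) => [st|ts] /=.
    rewrite (iid_expectation_pair sum_uniform_on (fun a b => (a \in nbhd E b)%:R)).
      by rewrite uniform_on_nbhd_pair.
    by rewrite neq_ltn st.
  by rewrite iid_expectation_cst ?sum_uniform_on // mulr0n invr_ge0 ler0n.
by rewrite sumr_const card_ord -[_ *+ T]mulr_natl.
Qed.

End UniformOnIndependentSet.

Section AveragedRegret.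
Variables (R : realType) (N T : nat) (E : rel 'I_N) (A : {set 'I_N}).
Hypotheses (A_indep : independent E A) (A_gt0 : (0 < #|A|)%N).
Variable alg : strategy R N 1.
Hypothesis alg_in : forall v t h, unit_segment (alg v t h).

Lemma mixture_expected_regret_ge eps : 0 <= eps <= 1 ->
  7 / 8 * (eps * T%:R) - 4 * eps ^+ 3 * (T%:R ^+ 2 / #|A|%:R)
  <= \sum_(g : {ffun 'I_T -> bool}) mixture_weight eps g * iid_expectation (uniform_on R A)
       (fun vs : {ffun 'I_T -> 'I_N} =>
          network_regret E unit_segment alg (singleton_sets vs) (sign_losses g) T).
Proof.
move=> eps01; have p_ge0 := @uniform_on_ge0 R N A.
have p_sum1 := sum_uniform_on R A_gt0.
under eq_bigr do rewrite -iid_expectationZ; rewrite -iid_expectation_sum.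
apply: le_trans (le_iid_expectation p_ge0
  (fun vs => mixture_regret_ge_draw E alg_in vs eps01)).
rewrite iid_expectationB iid_expectation_cst // iid_expectationZ iid_expectation_sum.
have e0 : 0 <= eps by case/andP: eps01.
rewrite lerD2l lerN2 ler_wpM2l ?mulr_ge0 ?exprn_ge0 //.
have seen_le t := @expected_card_seen_rounds_le R N T E A A_indep A_gt0 t.
apply: le_trans (ler_sum _ (fun t _ => seen_le t)) _.
by rewrite sumr_const card_ord -[_ *+ T]mulr_natl expr2 mulrA.
Qed.

End AveragedRegret.

Lemma exists_ge_weighted_avg (R : realDomainType) (I : finType) (i0 : I) (w F : I -> R) :
  (forall i, 0 <= w i) -> \sum_i w i = 1 -> exists i, \sum_j w j * F j <= F i.
Proof.
move=> w0 w1; have [i _ Fmax] := arg_maxP F (isT : predT i0).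
exists i; apply: le_trans (ler_sum _ (fun j _ => ler_wpM2l (w0 j) (Fmax j isT))) _.
by rewrite -mulr_suml w1 mul1r.
Qed.

Lemma tuned_bias (R : rcfType) (a T : R) : 0 < a <= T ->
  exists2 eps : R, 0 <= eps <= 1
    & 5 / 32 * Num.sqrt (a * T) = 7 / 8 * (eps * T) - 4 * eps ^+ 3 * (T ^+ 2 / a).
Proof.
move=> /andP[a0 aT]; have T0 : 0 < T by apply: lt_le_trans aT.
set r := Num.sqrt (a / T); have r0 : 0 <= r by apply: sqrtr_ge0.
have aT0 : 0 <= a / T by rewrite divr_ge0 // ltW.
have r2 : r ^+ 2 = a / T by rewrite sqr_sqrtr.
have r1 : r <= 1 by rewrite -sqrtr1 ler_sqrt // ler_pdivrMr // mul1r.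
exists (r / 4); first by apply/andP; split; lra.
have -> : Num.sqrt (a * T) = r * T.
  rewrite (_ : a * T = a / T * T ^+ 2); last by field; rewrite lt0r_neq0.
  by rewrite sqrtrM // sqrtr_sqr ger0_norm // ltW.
rewrite expr_div_n exprS r2; field.
by rewrite !lt0r_neq0.
Qed.

Local Open Scope classical_set_scope.

Theorem theorem4 (R : realType) :
  exists (d : nat) (X : set 'rV[R]_d),
    [/\ convex_set X, X !=set0 & forall x, X x -> enorm x <= 1] /\
    exists c : R, 0 < c /\
      forall (N : nat) (E : rel 'I_N), (0 < N)%N -> simple_graph E ->
      forall T : nat, (independence_number E <= T)%N ->
      forall alg : strategy R N d, (forall v t h, X (alg v t h)) ->
      exists (p : 'I_N -> R) (l : nat -> loss R d),
        [/\ is_distribution p,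
            (forall t, admissible_loss X (l t)) &
            c * Num.sqrt ((independence_number E)%:R * T%:R)
              <= iid_expectation p
                   (fun vs : {ffun 'I_T -> 'I_N} => network_regret E X alg (singleton_sets vs) l T)].
Proof.
exists 1%N, unit_segment; split.
  split; [exact: unit_segment_convex | exists 0 | exact: unit_segment_enorm].
  exact: unit_segment0.
exists (5 / 32); split=> [|N E N_gt0 [E_irr _] T alpha_le_T alg alg_in]; first lra.
have [A A_indep A_card] := independence_number_witness E.
have A_gt0 : (0 < #|A|)%N by rewrite A_card independence_number_gt0.
rewrite -A_card in alpha_le_T *.
have [|eps eps01 ->] := @tuned_bias R #|A|%:R T%:R.
  by rewrite ltr0n A_gt0 ler_nat.
have eps_le1 : `|eps| <= 1 by case/andP: eps01 => e0 e1; rewrite ger0_norm.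
pose expected_regret (g : {ffun 'I_T -> bool}) := iid_expectation (uniform_on R A)
  (fun vs : {ffun 'I_T -> 'I_N} =>
     network_regret E unit_segment alg (singleton_sets vs) (sign_losses g) T).
have [g avg_le] := exists_ge_weighted_avg [ffun=> true] expected_regret
  (fun g => mixture_weight_ge0 g eps_le1) (sum_mixture_weight _ eps).
exists (uniform_on R A), (sign_losses g); split.
- by split; [exact: uniform_on_ge0 | exact: sum_uniform_on].
- exact: sign_losses_admissible.
- by apply: le_trans avg_le; apply: mixture_expected_regret_ge.
Qed.
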